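(* The genus zero potential $\mathcal F_0^{un}$ of the untwisted theory of $(x^4+y^4+z^2,G_{max})$ is obtained from $\mathrm{res}_\hbar\ln\mathcal T^{(|G_{max}|)}$ by a linear change of variables, where $\mathrm{res}_\hbar$ denotes the coefficient of $\hbar^{-1}$.
   Context: $W=x^4+y^4+z^2$ with weights $q_1=q_2=\tfrac14$, $q_3=\tfrac12$; $G=G_{max}=\{(\Theta_1,\Theta_2,\Theta_3)\in(\mathbb Q/\mathbb Z)^3: 4\Theta_1=4\Theta_2=2\Theta_3=0\}$, of order $32$; each $h\in G$ is written uniquely as $(\Theta_1^h,\Theta_2^h,\Theta_3^h)$ with $0\le\Theta_k^h<1$. The untwisted theory has state space with basis $\{\phi_h\}_{h\in G}$, pairing $\langle\phi_{h_1},\phi_{h_2}\rangle=1$ if $h_1=h_2^{-1}$ and $0$ otherwise, and genus zero correlators $\langle\tau_{a_1}(\phi_{h_1})\cdots\tau_{a_n}(\phi_{h_n})\rangle^{un}_{0,n}=\binom{\sum_ia_i}{a_1,\dots,a_n}$ when $\sum_ia_i=n-3$ and $q_k(n-2)-\sum_{i=1}^n\Theta_k^{h_i}\in\mathbb Z$ for $k=1,2,3$, and $0$ otherwise; $\mathcal F_0^{un}=\sum\frac{1}{|\mathrm{Aut}|}\langle\tau_{a_1}(\phi_{h_1})\cdots\tau_{a_n}(\phi_{h_n})\rangle^{un}_{0,n}\prod_i t^{a_i,h_i}$. $\mathcal Z^{pt}(\{u^\ell\}_{\ell\ge0})=\exp(\sum_g\hbar^{g-1}\mathcal F_g^{pt})$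 is the Gromov--Witten partition function of a point, $\mathcal F_g^{pt}=\sum_n\frac1{n!}\sum_{a_1,\dots,a_n}\int_{\overline{\mathcal M}_{g,n}}\psi_1^{a_1}\cdots\psi_n^{a_n}\,u^{a_1}\cdots u^{a_n}$, and $\mathcal T^{(m+1)}:=\prod_{k=0}^m\mathcal Z^{pt}(\{u^{\ell,k}\}_{\ell\ge0})$ in independent sets of variables. *)

From mathcomp Require Import all_boot all_order all_algebra all_field.
Set Implicit Arguments. Unset Strict Implicit. Unset Printing Implicit Defensive.
Import Order.TTheory GRing.Theory Num.Theory.
Local Open Scope ring_scope.

(* h = (i, j, l) encodes (Theta_1, Theta_2, Theta_3) = (i/4, j/4, l/2)
   with 0 <= Theta_k < 1; these are exactly the 32 elements of
   {Theta in (Q/Z)^3 : 4 Theta_1 = 4 Theta_2 = 2 Theta_3 = 0}. *)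
Definition Gmax : finType := ('I_4 * 'I_4 * 'I_2)%type.

Definition Theta (h : Gmax) (k : 'I_3) : rat :=
  if val k == 0%N then (h.1.1 : nat)%:R / 4
  else if val k == 1%N then (h.1.2 : nat)%:R / 4
  else (h.2 : nat)%:R / 2.

(* Weights of W = x^4 + y^4 + z^2. *)
Definition qw (k : 'I_3) : rat := if val k == 2%N then 1 / 2 else 1 / 4.

Definition multinom (s : seq nat) : nat :=
  ((sumn s)`! %/ \prod_(a <- s) a`!)%N.

(* ---------- Formal power series via Taylor coefficients ----------
   A formal power series F in variables x_v (v : V) is represented by its
   symmetric Taylor-coefficient tensor  c : seq V -> algC,
   c [:: v_1; ...; v_n] = d^n F / dx_{v_1} ... dx_{v_n} (0), i.e.
   F = sum_n 1/n! sum_{v_1..v_n} c(v_1..v_n) x_{v_1} ... x_{v_n}. *)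
Definition fps (V : Type) := seq V -> algC.

Definition corr_un (s : seq (nat * Gmax)) : algC :=
  let n := size s in
  if ((sumn (map fst s) + 3)%N == n) &&
     [forall k : 'I_3,
        (qw k * (n%:R - 2) - \sum_(x <- s) Theta x.2 k) \is a Num.int]
  then (multinom (map fst s))%:R else 0.

Definition F0un : fps (nat * Gmax) := corr_un.

(* Genus-zero descendant integrals of a point:
   int_{Mbar_{0,n}} psi_1^{a_1} ... psi_n^{a_n}
     = binom(n-3; a_1..a_n) if sum a_i = n - 3, and 0 otherwise. *)
Definition corr_pt0 (s : seq nat) : algC :=
  if (sumn s + 3)%N == size s then (multinom s)%:R else 0.

(* res_hbar ln T^{(m+1)} = sum_{k=0}^{m} F_0^{pt}({u^{l,k}}_l), in the variables
   u^{l,k}, l : nat, k : 'I_(m+1). Taylor coefficients: *)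
Definition resLnT (m : nat) : fps (nat * 'I_m.+1) := fun s =>
  \sum_(k < m.+1) (if all (fun x => x.2 == k) s then corr_pt0 (map fst s) else 0).

(* ---------- Linear changes of variables ----------
   u_w = sum_v M w v * x_v   (w : W, v : V),
   where for each v only the w in the finite list (col v) have M w v <> 0. *)
Definition col_finite (V W : eqType) (M : W -> V -> algC) (col : V -> seq W) :=
  forall v w, M w v != 0 -> w \in col v.

(* Taylor coefficients of x |-> G(M x):
   d^n/dx_{v_1}..dx_{v_n} G(Mx)(0) = sum_{w_1..w_n} prod_i M w_i v_i * c_G(w_1..w_n). *)
Fixpoint subst_aux (V W : eqType) (M : W -> V -> algC) (col : V -> seq W)
    (G : fps W) (acc : seq W) (s : seq V) : algC :=
  match s with
  | [::] => G (rev acc)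
  | v :: s' => \sum_(w <- undup (col v)) M w v * subst_aux M col G (w :: acc) s'
  end.

Definition subst (V W : eqType) (M : W -> V -> algC) (col : V -> seq W)
    (G : fps W) : fps V := fun s => subst_aux M col G [::] s.

Definition lin_inverse (V W : eqType) (M : W -> V -> algC) (colM : V -> seq W)
    (N : V -> W -> algC) (colN : W -> seq V) :=
  col_finite N colN /\
  (forall w w', \sum_(v <- undup (colN w')) M w v * N v w' = (w == w')%:R) /\
  (forall v v', \sum_(w <- undup (colM v')) N v w * M w v' = (v == v')%:R).
Arguments resLnT : clear implicits.

From mathcomp Require Import all_boot all_order all_algebra all_field.
From mathcomp Require Import ring zify.
Set Implicit Arguments.
Unset Strict Implicit.
Unset Printing Implicit Defensive.
Import Order.TTheory GRing.Theory Num.Theory.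
Local Open Scope ring_scope.

(* The genus-zero descendant integrals of a point are the same multinomial
   coefficients as the untwisted correlators; only the selection rule
   sum_i Theta^{h_i} = q (n - 2) mod Z^3 is missing.  By orthogonality of the
   characters chi of G_max, |G|^-1 sum_chi chi(sum_i h_i - (n - 2) J), with
   J = (1/4, 1/4, 1/2), is the indicator of that rule.  So one substitutes
   u^{a,chi} = c^(a-1) chi((2a+1) J) sum_h chi(h) t^{a,h} with c^3 = |G| into
   the |G| copies of F_0^pt: a correlator with sum_i a_i = n - 3 picks up
   c^(-3) chi(sum_i h_i + 3 (n - 2) J), and 3 (n - 2) J = -(n - 2) J since 4 J = 0.
   Level by level this substitution is a discrete Fourier transform on G_max,
   hence invertible. *)

Lemma sum_prim_root_exp (R : idomainType) (n X : nat) (z : R) :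
  n.-primitive_root z -> \sum_(p < n) z ^+ (p * X) = (n %| X)%:R * n%:R.
Proof.
move=> prim_z; under eq_bigr do rewrite mulnC exprM.
rewrite (prim_order_dvd prim_z); have [->|zX_neq1] := eqVneq (z ^+ X) 1.
  by rewrite mul1r; under eq_bigr do rewrite expr1n; rewrite sumr_const card_ord.
have : (z ^+ X) ^+ n - 1 = 0 by rewrite exprAC (prim_expr_order prim_z) expr1n subrr.
by rewrite subrX1 mul0r => /eqP; rewrite mulf_eq0 subr_eq0 (negPf zX_neq1) => /eqP.
Qed.

Lemma sum_triple_mul (R : comNzRingType) (I J K : finType)
    (a : I -> R) (b : J -> R) (c : K -> R) :
  \sum_(x : I * J * K) a x.1.1 * b x.1.2 * c x.2 =
  (\sum_i a i) * (\sum_j b j) * (\sum_k c k).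
Proof.
rewrite 2!mulr_suml.
rewrite -(pair_bigA _ (fun ij k => a ij.1 * b ij.2 * c k)).
rewrite -(pair_bigA _ (fun i j => \sum_k a i * b j * c k)).
apply: eq_bigr => i _; rewrite [a i * _]mulr_sumr mulr_suml.
by apply: eq_bigr => j _; rewrite mulr_sumr.
Qed.

Lemma dvdn_addMpred d c c' :
  (c < d)%N -> (c' < d)%N -> (d %| c + d.-1 * c')%N = (c == c').
Proof.
move=> lt_cd lt_c'd; have d_gt0 : (0 < d)%N by apply: leq_ltn_trans lt_cd.
rewrite /dvdn -[0%N](mod0n d) -(eqn_modDr c') add0n -addnA -mulSnr prednK //.
by rewrite mulnC addnC modnMDl !modn_small.
Qed.

Lemma natr_div_int (m d : nat) :
  (0 < d)%N -> ((m%:R / d%:R : rat) \is a Num.int) = (d %| m)%N.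
Proof.
move=> d_gt0; have d_neq0 : (d%:R : rat) != 0 by rewrite pnatr_eq0 -lt0n.
rewrite {1}(divn_eq m d) natrD natrM mulrDl mulfK // rpredDl ?natr_int // /dvdn.
have [->|r_neq0] := eqVneq (m %% d)%N 0%N; first by rewrite mul0r rpred0.
apply/negbTE/negP => r_int; have r_gt0 : (0 : rat) < (m %% d)%:R / d%:R.
  by apply: divr_gt0; rewrite ltr0n // lt0n.
have := norm_intr_ge1 r_int (lt0r_neq0 r_gt0).
by rewrite gtr0_norm // ler_pdivlMr ?ltr0n // mul1r ler_nat leqNgt ltn_mod d_gt0.
Qed.

Definition level_mx (A B : finType) (F : A -> nat * B -> algC)
    (w : nat * A) (v : nat * B) : algC :=
  (w.1 == v.1)%:R * F w.2 v.

Definition level_col (A B : finType) (v : nat * B) : seq (nat * A) :=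
  [seq (v.1, a) | a <- enum A].
Arguments level_col A {B} v.

Lemma undup_level_col (A B : finType) (v : nat * B) : undup (level_col A v) = level_col A v.
Proof. by rewrite undup_id // map_inj_uniq ?enum_uniq // => a a' [->]. Qed.

Lemma col_finite_level (A B : finType) (F : A -> nat * B -> algC) :
  col_finite (level_mx F) (level_col A).
Proof.
move=> [a h] [l k]; rewrite /level_mx /=.
have [-> _|] := eqVneq l a; last by rewrite mul0r eqxx.
by apply/mapP; exists k; rewrite ?mem_enum.
Qed.

Lemma lin_inverse_level (A B : finType)
    (F : A -> nat * B -> algC) (G : B -> nat * A -> algC) :
  (forall a k k', \sum_h F k (a, h) * G h (a, k') = (k == k')%:R) ->
  (forall a h h', \sum_k G h (a, k) * F k (a, h') = (h == h')%:R) ->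
  lin_inverse (level_mx F) (level_col A) (level_mx G) (level_col B).
Proof.
move=> FG GF; split; first exact: col_finite_level.
split=> [[l k] [l' k'] | [a h] [a' h']];
  rewrite undup_level_col big_map big_enum /level_mx /= eqxx xpair_eqE.
- have [<-|_] := eqVneq l l'; last by rewrite big1 // => h _; rewrite !mul0r.
  by under eq_bigr do rewrite !mul1r; rewrite FG.
- have [<-|_] := eqVneq a a'; last by rewrite big1 // => k _; rewrite !mul0r.
  by under eq_bigr do rewrite !mul1r; rewrite GF.
Qed.

Section SubstResLnT.

Variables (m : nat) (B : finType) (F : 'I_m.+1 -> nat * B -> algC).

Lemma subst_aux_level_resLnT (acc : seq (nat * 'I_m.+1)) (s : seq (nat * B)) :
  subst_aux (level_mx F) (level_col 'I_m.+1) (resLnT m) acc s =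
  \sum_k (all (fun x => x.2 == k) acc)%:R * \prod_(x <- s) F k x
           * corr_pt0 (map fst (rev acc) ++ map fst s).
Proof.
elim: s acc => [|v s IHs] acc /=.
  apply: eq_bigr => k _.
  by rewrite all_rev big_nil cats0 mulr1; case: all; rewrite ?mul1r ?mul0r.
rewrite undup_level_col big_map big_enum /=.
under eq_bigr do rewrite IHs mulr_sumr.
rewrite exchange_big /=; apply: eq_bigr => k _.
rewrite (bigD1 k) //= [X in _ + X]big1 ?addr0; last first.
  by move=> k' /negPf neq_k'k; rewrite neq_k'k !mul0r mulr0.
rewrite eqxx rev_cons map_rcons cat_rcons big_cons /level_mx /= eqxx mul1r.
by case: all; rewrite ?mul0r ?mulr0 ?mul1r ?mulrA.
Qed.

Lemma subst_level_resLnT (s : seq (nat * B)) :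
  subst (level_mx F) (level_col 'I_m.+1) (resLnT m) s =
  (\sum_k \prod_(x <- s) F k x) * corr_pt0 (map fst s).
Proof.
by rewrite /subst subst_aux_level_resLnT mulr_suml; apply: eq_bigr => k _; rewrite mul1r.
Qed.

End SubstResLnT.

Lemma prim_root_Ci : 4.-primitive_root ('i : algC).
Proof.
have N1_neq1 : (-1 : algC) != 1 by rewrite eq_sym -addr_eq0 -mulr2n pnatr_eq0.
have Ci_neq1 : ('i : algC) != 1.
  by apply: contraNneq N1_neq1 => Ci1; rewrite -sqrCi Ci1 expr1n.
have Ci4 : ('i : algC) ^+ 4 = 1 by rewrite (exprM _ 2 2) sqrCi sqrrN expr1n.
have Ci3_neq1 : ('i : algC) ^+ 3 != 1.
  by apply: contraNneq Ci_neq1 => Ci3; apply/eqP; rewrite -[LHS]mul1r -{1}Ci3 -exprSr Ci4.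
apply/andP; split => //; apply/forallP => -[[|[|[|[|//]]]] lt_k4];
by rewrite unity_rootE /= ?expr1 ?sqrCi ?Ci4 ?eqxx
  ?(negPf Ci_neq1) ?(negPf N1_neq1) ?(negPf Ci3_neq1).
Qed.

Definition ordG (j : 'I_3) : nat := if val j == 2 then 2 else 4.

Definition coord (h : Gmax) (j : 'I_3) : nat :=
  if val j == 0 then val h.1.1 else if val j == 1 then val h.1.2 else val h.2.

Lemma ordG_dvd4 j : (ordG j %| 4)%N.
Proof. by rewrite /ordG; case: eqP. Qed.

Lemma ordG_gt0 j : (0 < ordG j)%N.
Proof. by rewrite /ordG; case: ifP. Qed.

Lemma coord_ltn h j : (coord h j < ordG j)%N.
Proof. by case: j => -[|[|[|//]]] ?; rewrite /coord /ordG /=. Qed.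

Lemma eq_coord g g' : (forall j, coord g j = coord g' j) -> g = g'.
Proof.
case: g g' => [[p q] r] [[p' q'] r'] eq_gg'.
have := eq_gg' ord0; have := eq_gg' (lift ord0 ord0); have := eq_gg' ord_max.
by rewrite /coord /= => /val_inj-> /val_inj-> /val_inj->.
Qed.

Lemma ThetaE h j : Theta h j = (coord h j)%:R / (ordG j)%:R.
Proof. by case: j => -[|[|[|//]]] ?. Qed.

Lemma qwE j : qw j = 1 / (ordG j)%:R.
Proof. by case: j => -[|[|[|//]]] ?. Qed.

Lemma qw_int j (m C : nat) :
  (qw j * m%:R - C%:R / (ordG j)%:R \is a Num.int) = (ordG j %| C + 3 * m)%N.
Proof.
have d_gt0 := ordG_gt0 j; have d_neq0 : ((ordG j)%:R : rat) != 0 by rewrite pnatr_eq0 -lt0n.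
have -> : qw j * m%:R - C%:R / (ordG j)%:R =
          (4 %/ ordG j * m)%:R - (C + 3 * m)%:R / (ordG j)%:R.
  by rewrite qwE natrM natr_div ?ordG_dvd4 ?unitfE // natrD natrM; field.
by rewrite rpredBl ?natr_int // natr_div_int.
Qed.

Definition zeta (j : 'I_3) : algC := 'i ^+ (4 %/ ordG j).

Lemma prim_root_zeta j : (ordG j).-primitive_root (zeta j).
Proof. exact: dvdn_prim_root prim_root_Ci _ (ordG_dvd4 j). Qed.

(* For e = coord g, chi e is the character of G_max attached to g:
   chi e x = exp(2 pi i sum_j e_j x_j / ordG j). *)
Definition chi (e x : 'I_3 -> nat) : algC := \prod_(j < 3) zeta j ^+ (e j * x j).

Lemma chiC e x : chi e x = chi x e.
Proof. by apply: eq_bigr => j _; rewrite mulnC. Qed.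

Lemma eq_chi e x y : x =1 y -> chi e x = chi e y.
Proof. by move=> eq_xy; apply: eq_bigr => j _; rewrite eq_xy. Qed.

Lemma chiD e x y : chi e (fun j => x j + y j)%N = chi e x * chi e y.
Proof. by rewrite -big_split; apply: eq_bigr => j _; rewrite mulnDr exprD. Qed.

Lemma chi0 e : chi e (fun=> 0%N) = 1.
Proof. by apply: big1 => j _; rewrite muln0. Qed.

Lemma chiV e x : (chi e x)^-1 = chi e (fun j => (ordG j).-1 * x j)%N.
Proof.
apply: mulr1_eq; rewrite -chiD -(chi0 e); apply: eq_bigr => j _ /=.
rewrite -mulSn prednK ?ordG_gt0 // mulnCA exprM.
by rewrite (prim_expr_order (prim_root_zeta j)) expr1n muln0 expr0.
Qed.

Lemma chi_neq0 e x : chi e x != 0.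
Proof.
apply/prodf_neq0 => j _; apply: expf_neq0.
by rewrite (prim_root_eq0 (prim_root_zeta j)) -lt0n ordG_gt0.
Qed.

Lemma sum_chi_coord e :
  \sum_(h : Gmax) chi e (coord h) = [forall j, ordG j %| e j]%N%:R * 32.
Proof.
have sum_zeta j :
    \sum_(c < ordG j) zeta j ^+ (c * e j) = (ordG j %| e j)%N%:R * (ordG j)%:R.
  exact: sum_prim_root_exp (prim_root_zeta j).
pose j0 : 'I_3 := ord0; pose j1 : 'I_3 := lift ord0 ord0.
pose j2 : 'I_3 := lift ord0 (lift ord0 ord0).
rewrite (eq_bigr (fun h : Gmax => zeta j0 ^+ (h.1.1 * e j0) *
   zeta j1 ^+ (h.1.2 * e j1) * zeta j2 ^+ (h.2 * e j2))); last first.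
  by move=> h _; rewrite /chi !big_ord_recl big_ord0 mulr1 mulrA /coord /= !(mulnC (e _)).
rewrite (sum_triple_mul (fun p : 'I_4 => zeta j0 ^+ (p * e j0))
  (fun q : 'I_4 => zeta j1 ^+ (q * e j1)) (fun r : 'I_2 => zeta j2 ^+ (r * e j2))).
rewrite (sum_zeta j0) (sum_zeta j1) (sum_zeta j2).
rewrite -(big_andE xpredT) !big_ord_recl big_ord0 andbT -!mulnb !natrM /=.
ring.
Qed.

Lemma chi_coord_orthogonal g g' :
  \sum_(h : Gmax) chi (coord g) (coord h) / chi (coord g') (coord h) = (g == g')%:R * 32.
Proof.
under eq_bigr do rewrite chiC [chi (coord g') _]chiC chiV -chiD chiC.
rewrite sum_chi_coord; congr ((nat_of_bool _)%:R * _).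
apply/forallP/eqP => [dvd_coord | <- j]; last by rewrite dvdn_addMpred ?coord_ltn.
apply: eq_coord => j; apply/eqP.
by rewrite -(dvdn_addMpred (coord_ltn _ _) (coord_ltn _ _)) dvd_coord.
Qed.

Lemma card_Gmax : #|Gmax| = 32%N.
Proof. by rewrite !card_prod !card_ord. Qed.

Definition Gmax_of_ord (k : 'I_32) : Gmax := enum_val (cast_ord (esym card_Gmax) k).

Lemma Gmax_of_ord_bij : bijective Gmax_of_ord.
Proof.
exists (fun g => cast_ord card_Gmax (enum_rank g)) => [k | g].
  by rewrite /Gmax_of_ord enum_valK cast_ordKV.
by rewrite /Gmax_of_ord cast_ordK enum_rankK.
Qed.

Lemma sum_Gmax_of_ord (F : Gmax -> algC) : \sum_(k < 32) F (Gmax_of_ord k) = \sum_g F g.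
Proof. by symmetry; apply: reindex; apply: onW_bij Gmax_of_ord_bij. Qed.

Definition cbrt32 : algC := 3.-root 32.

Lemma cbrt32_neq0 : cbrt32 != 0.
Proof. by rewrite rootC_eq0 // pnatr_eq0. Qed.

Lemma cbrt32_cube : cbrt32 ^+ 3 = 32.
Proof. by rewrite rootCK. Qed.

(* J = (1/4, 1/4, 1/2) has coordinates (fun=> 1).  The factor chi((2a+1) J)
   makes a correlator of length n = sum_i a_i + 3 carry the total shift
   (2 sum_i a_i + n) J = 3 (n - 2) J. *)
Definition scale (k : 'I_32) (a : nat) : algC :=
  cbrt32 ^+ a / cbrt32 * chi (coord (Gmax_of_ord k)) (fun=> (2 * a).+1)%N.

Definition fourier (k : 'I_32) (x : nat * Gmax) : algC :=
  scale k x.1 * chi (coord (Gmax_of_ord k)) (coord x.2).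

Definition fourier_inv (h : Gmax) (x : nat * 'I_32) : algC :=
  (fourier x.2 (x.1, h))^-1 / 32.

Lemma scale_neq0 k a : scale k a != 0.
Proof. by rewrite !mulf_neq0 ?expf_neq0 ?invr_eq0 ?cbrt32_neq0 ?chi_neq0. Qed.

Lemma fourierK a k k' :
  \sum_(h : Gmax) fourier k (a, h) * fourier_inv h (a, k') = (k == k')%:R.
Proof.
set g := Gmax_of_ord k; set g' := Gmax_of_ord k'.
rewrite (eq_bigr (fun h => scale k a / scale k' a / 32 *
                           (chi (coord g) (coord h) / chi (coord g') (coord h)))); last first.
  by move=> h _; rewrite /fourier_inv /fourier /= invfM; ring.
rewrite -mulr_sumr chi_coord_orthogonal (inj_eq (bij_inj Gmax_of_ord_bij)).
have [->|_] := eqVneq k k'; last by rewrite !mul0r mulr0.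
by rewrite mulfV ?scale_neq0 // mul1r mul1r mulVf // pnatr_eq0.
Qed.

Lemma fourier_invK a h h' :
  \sum_(k < 32) fourier_inv h (a, k) * fourier k (a, h') = (h == h')%:R.
Proof.
rewrite (eq_bigr (fun k => 32^-1 * (chi (coord h') (coord (Gmax_of_ord k)) /
                                    chi (coord h) (coord (Gmax_of_ord k))))); last first.
  move=> k _; rewrite /fourier_inv /fourier /= invfM !(chiC (coord (Gmax_of_ord k))).
  by field; rewrite scale_neq0 chi_neq0.
rewrite -mulr_sumr.
rewrite (sum_Gmax_of_ord (fun g => chi (coord h') (coord g) / chi (coord h) (coord g))).
by rewrite chi_coord_orthogonal eq_sym mulrC -mulrA mulfV ?mulr1 // pnatr_eq0.
Qed.

Definition shifted_coord (x : nat * Gmax) (j : 'I_3) : nat :=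
  (coord x.2 j + (2 * x.1).+1)%N.

Lemma sum_shifted_coord (s : seq (nat * Gmax)) j :
  (\sum_(x <- s) shifted_coord x j =
   \sum_(x <- s) coord x.2 j + 2 * sumn (map fst s) + size s)%N.
Proof.
elim: s => [|x s IHs]; first by rewrite !big_nil.
by rewrite !big_cons IHs /shifted_coord /=; lia.
Qed.

Lemma selection_rule (s : seq (nat * Gmax)) j :
  (sumn (map fst s) + 3)%N = size s ->
  (qw j * ((size s)%:R - 2) - \sum_(x <- s) Theta x.2 j \is a Num.int) =
  (ordG j %| \sum_(x <- s) shifted_coord x j)%N.
Proof.
set A := sumn (map fst s) => n_eq; rewrite sum_shifted_coord -n_eq -/A.
have -> : (A + 3)%N = (A.+1 + 2)%N by rewrite addSnnS.
under [in LHS]eq_bigr do rewrite ThetaE.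
rewrite natrD addrK -mulr_suml -natr_sum qw_int.
by congr (_ %| _)%N; lia.
Qed.

Lemma prod_fourier k (s : seq (nat * Gmax)) :
  \prod_(x <- s) fourier k x =
  cbrt32 ^+ sumn (map fst s) / cbrt32 ^+ size s *
  chi (coord (Gmax_of_ord k)) (fun j => \sum_(x <- s) shifted_coord x j)%N.
Proof.
set e := coord (Gmax_of_ord k).
elim: s => [|x s IHs].
  by rewrite big_nil expr0 divr1 mul1r -(chi0 e); apply: eq_chi => j; rewrite big_nil.
rewrite big_cons IHs [in RHS](@eq_chi e _
  (fun j => shifted_coord x j + \sum_(y <- s) shifted_coord y j)%N);
  last by move=> j; rewrite big_cons.
rewrite chiD /shifted_coord chiD /fourier /scale /= exprD exprS invfM.
ring.
Qed.

Lemma sum_prod_fourier (s : seq (nat * Gmax)) :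
  (sumn (map fst s) + 3)%N = size s ->
  \sum_(k < 32) \prod_(x <- s) fourier k x =
  [forall j, ordG j %| \sum_(x <- s) shifted_coord x j]%N%:R.
Proof.
move=> n_eq; pose Y j := (\sum_(x <- s) shifted_coord x j)%N.
under eq_bigr do rewrite prod_fourier -n_eq exprD invfM mulrA mulfV ?expf_neq0 ?cbrt32_neq0 //
  mul1r cbrt32_cube chiC.
rewrite -mulr_sumr (sum_Gmax_of_ord (fun g => chi Y (coord g))) sum_chi_coord.
by rewrite mulrCA mulVf ?mulr1 // pnatr_eq0.
Qed.

Theorem mainTheorem7 :
  exists (M : nat * 'I_32 -> nat * Gmax -> algC)
         (colM : nat * Gmax -> seq (nat * 'I_32))
         (N : nat * Gmax -> nat * 'I_32 -> algC)
         (colN : nat * 'I_32 -> seq (nat * Gmax)),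
    col_finite M colM /\ lin_inverse M colM N colN /\
    forall s : seq (nat * Gmax), F0un s = subst M colM (resLnT 31) s.
Proof.
exists (level_mx fourier), (level_col 'I_32), (level_mx fourier_inv), (level_col Gmax).
split; first exact: col_finite_level.
split; first exact: lin_inverse_level fourierK fourier_invK.
move=> s; rewrite subst_level_resLnT /F0un /corr_un /corr_pt0 size_map.
have [n_eq|_] := eqVneq; last by rewrite mulr0.
rewrite sum_prod_fourier // (eq_forallb (fun j => selection_rule j n_eq)) mulrC.
by case: [forall j, _]%N; rewrite ?mulr1 ?mulr0.
Qed.
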